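(* Let $r,s$ be real numbers with $s<r$ and $s\le 0$, let $G$ be a finite group and let $n$ be a positive divisor of $|G|$. Then $T_{G,n}(r,s)\ge 0$, with equality if and only if for every positive divisor $m$ of $n$, $G$ contains exactly one cyclic subgroup of order $m$.
   Context: $o(x)$ is the order of $x$, $\varphi$ is Euler's totient function, and $C_N$ is the cyclic group of order $N$. For a finite group $G$, a positive divisor $n$ of $|G|$ and reals $r,s$, define $R_{G,n}(r,s) := \sum_{x\in G,\ o(x)\mid n} \frac{o(x)^s}{\varphi(o(x))^r}$ and $T_{G,n}(r,s) := R_{G,n}(r,s) - R_{C_{|G|},n}(r,s)$. *)

From Stdlib Require Import Reals.
From mathcomp Require Import all_boot all_order all_algebra all_fingroup all_solvable.
Set Implicit Arguments. Unset Strict Implicit. Unset Printing Implicit Defensive.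

(* R_{G,n}(r,s) = sum over x in G with o(x) | n of o(x)^s / phi(o(x))^r,
   with real exponents via Rpower (o(x), phi(o(x)) are >= 1). *)
Definition Rsum (gT : finGroupType) (G : {set gT}) (n : nat) (r s : R) : R :=
  \big[Rplus/R0]_(x in G | (#[x]%g %| n)%N)
     (Rdiv (Rpower (INR #[x]%g) s) (Rpower (INR (totient #[x]%g)) r)).

Definition Cyc (N : nat) : {set 'Z_N} := Zp N.

Definition Tsum (gT : finGroupType) (G : {set gT}) (n : nat) (r s : R) : R :=
  Rminus (Rsum G n r s) (Rsum (Cyc #|G|) n r s).

Definition num_cyclic_subgroups (gT : finGroupType) (G : {set gT}) (m : nat) : nat :=
  #|[set H : {group gT} | [&& H \subset G, cyclic H & #|H| == m]]|.

(* Write w(d) = d^s / phi(d)^r.  It is multiplicative, and for s <= 0 and s < r it does not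
   increase along p^k | p^(k+1).  Peeling off one prime p | n at a time, with
   w(p^a) = sum_(a <= j <= e) c_j for nonnegative telescoping coefficients c_j, shows that
   sum_(x : o(x) | n) w(o(x)) is a nonnegative combination of the counts
   c(m) = #{x : o(x) | m}, m | n, and that the coefficient of c(m) is positive unless
   s = 0, m is odd and n is even.  Frobenius' theorem gives c_G(m) >= m = c_(C_|G|)(m),
   hence T >= 0, and T = 0 forces c_G(m) = m for all m | n (for odd m via 2m and an
   involution from Cauchy's theorem).  Finally c_G(m) = m for all m | n holds exactly
   when G has a unique cyclic subgroup of each order m | n: a subgroup of order m then
   fills the whole solution set of x^m = 1, and conversely counting elements by order
   against sum_(d | m) phi(d) = m produces an element of order m. *)

From Stdlib Require Import Reals Lra.
From HB Require Import structures.
From mathcomp Require Import all_boot all_order all_algebra all_fingroup all_solvable.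
Set Implicit Arguments. Unset Strict Implicit. Unset Printing Implicit Defensive.

HB.instance Definition _ := Monoid.isComLaw.Build R R0 Rplus
  (fun x y z => esym (Rplus_assoc x y z)) Rplus_comm Rplus_0_l.
HB.instance Definition _ := Monoid.isMulLaw.Build R R0 Rmult Rmult_0_l Rmult_0_r.
HB.instance Definition _ := Monoid.isAddLaw.Build R Rmult Rplus
  Rmult_plus_distr_r Rmult_plus_distr_l.

Section RealSums.
Local Open Scope R_scope.

Lemma rsum_le (I : Type) (r : seq I) (P : pred I) (F G : I -> R) :
  (forall i, P i -> F i <= G i) ->
  \big[Rplus/R0]_(i <- r | P i) F i <= \big[Rplus/R0]_(i <- r | P i) G i.
Proof.
move=> leFG; apply: (big_ind2 Rle) => //; first exact: Rle_refl.
by move=> *; apply: Rplus_le_compat.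
Qed.

Lemma rsum_lt (I : finType) (P : pred I) (F G : I -> R) i0 :
  (forall i, P i -> F i <= G i) -> P i0 -> F i0 < G i0 ->
  \big[Rplus/R0]_(i | P i) F i < \big[Rplus/R0]_(i | P i) G i.
Proof.
move=> leFG Pi0 ltFG0; rewrite (bigD1 i0) //= [X in _ < X](bigD1 i0) //=.
suff: \big[Rplus/R0]_(i | P i && (i != i0)) F i <= \big[Rplus/R0]_(i | P i && (i != i0)) G i.
  by lra.
by apply: rsum_le => i /andP[Pi _]; apply: leFG.
Qed.

Lemma rsum_const (T : finType) (X : {set T}) (c : R) :
  \big[Rplus/R0]_(x in X) c = INR #|X| * c.
Proof.
rewrite big_const; elim: #|X| => [|k IH] /=; first by rewrite Rmult_0_l.
by rewrite IH; case: k {IH} => [|k] /=; ring.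
Qed.

Lemma rsum_telescope (f : nat -> R) a e : (a <= e)%N ->
  \big[Rplus/R0]_(j < e | (a <= j)%N) (f j - f j.+1) = f a - f e.
Proof.
elim: e => [|e IH]; first by rewrite leqn0 => /eqP->; rewrite big_ord0; ring.
rewrite leq_eqVlt => /orP[/eqP <-|]; last first.
  by rewrite ltnS => ae; rewrite big_mkcond big_ord_recr -big_mkcond /= ae IH //; ring.
by rewrite big_pred0 => [|j]; [ring | rewrite leqNgt ltn_ord].
Qed.

Lemma exp_le_exp x y : x <= y -> exp x <= exp y.
Proof. by case=> [/exp_increasing/Rlt_le | ->]; [| exact: Rle_refl]. Qed.

Lemma ln_ge0 x : 1 <= x -> 0 <= ln x.
Proof. by case=> [x1 | <-]; rewrite -ln_1; [apply/Rlt_le/ln_increasing; lra | exact: Rle_refl]. Qed.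

Lemma ln_gt0 x : 1 < x -> 0 < ln x.
Proof. by move=> x1; rewrite -ln_1; apply: ln_increasing; lra. Qed.

Lemma INR_gt1 k : (1 < k)%N -> 1 < INR k.
Proof. by move/ltP/lt_INR. Qed.

Lemma INR_gt0 k : (0 < k)%N -> 0 < INR k.
Proof. by move/ltP; apply: lt_0_INR. Qed.

End RealSums.

Definition count_dvd (T : finType) (X : {set T}) (o : T -> nat) m :=
  #|[set x in X | o x %| m]|.

Definition layer (T : finType) (X : {set T}) (o : T -> nat) p j :=
  [set x in X | logn p (o x) <= j].

Definition p'part (T : Type) (o : T -> nat) p x := (o x)`_p^'.

Lemma dvdn_pexp_mul_p' p j m d : prime p -> 0 < d -> coprime p m ->
  (d %| p ^ j * m) = (logn p d <= j) && (d`_p^' %| m).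
Proof.
move=> pp d0 cpm.
rewrite -{1}(partnC p d0) Gauss_dvd ?coprime_partC // p_part Gauss_dvdl.
  rewrite (dvdn_Pexp2l _ _ (prime_gt1 pp)) Gauss_dvdr //.
  by apply: p'nat_coprime (part_pnat _ _) _; rewrite pnatX pnat_id.
exact: coprimeXl.
Qed.

Lemma logn_p'part p q m : prime p -> q != p -> 0 < m -> logn q m`_p^' = logn q m.
Proof.
move=> pp qp m0; rewrite -{2}(partnC p m0) lognM ?part_gt0 //.
by rewrite p_part lognX (logn_prime q pp) (negbTE qp) muln0.
Qed.

Lemma p'part_lt p n : prime p -> 0 < n -> p %| n -> n`_p^' < n.
Proof.
move=> pp n0 pn; rewrite -{2}(partnC p n0) ltn_Pmull ?part_gt0 //.
by rewrite p_part -[1](expn0 p) ltn_exp2l ?prime_gt1 // logn_gt0 mem_primes pp n0.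
Qed.

Lemma dvdn_pexp_mul_p'part p n j m : 0 < n -> j <= logn p n -> m %| n`_p^' ->
  p ^ j * m %| n.
Proof. by move=> n0 jn mn; rewrite -(partnC p n0) p_part dvdn_mul // dvdn_exp2l. Qed.

Section Layers.
Variables (p n : nat) (T : finType) (X : {set T}) (o : T -> nat).
Hypotheses (p_pr : prime p) (n_gt0 : 0 < n) (o_dvd : {in X, forall x, o x %| n}).

Lemma p'part_dvd_layer j : {in layer X o p j, forall x, p'part o p x %| n`_p^'}.
Proof. by move=> x /setIdP[Xx _]; apply: partn_dvd n_gt0 (o_dvd Xx). Qed.

Lemma count_dvd_layer j m : m %| n`_p^' ->
  count_dvd (layer X o p j) (p'part o p) m = count_dvd X o (p ^ j * m).
Proof.
move=> mn; apply: eq_card => x; rewrite !inE -andbA.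
case Xx: (x \in X) => //=; rewrite dvdn_pexp_mul_p' //.
  exact: dvdn_gt0 n_gt0 (o_dvd Xx).
by apply: pnat_coprime (pnat_id p_pr) (pnat_dvd mn (part_pnat _ _)).
Qed.

End Layers.

Lemma count_dvd_layer_le n (T U : finType) (X : {set T}) (Y : {set U}) oX oY p j :
  prime p -> 0 < n -> {in X, forall x, oX x %| n} -> {in Y, forall y, oY y %| n} ->
  (forall m, m %| n -> count_dvd Y oY m <= count_dvd X oX m) -> j <= logn p n ->
  forall m, m %| n`_p^' ->
  count_dvd (layer Y oY p j) (p'part oY p) m <= count_dvd (layer X oX p j) (p'part oX p) m.
Proof.
move=> pp n0 oX_dvd oY_dvd count_le jn m mn.
rewrite (count_dvd_layer pp n0 oX_dvd) // (count_dvd_layer pp n0 oY_dvd) //.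
exact/count_le/dvdn_pexp_mul_p'part.
Qed.

Section Comparison.
Variable h : nat -> R.
Hypothesis h_gt0 : forall d, Rlt 0 (h d).
Hypothesis h_mul :
  forall a b, 0 < a -> 0 < b -> coprime a b -> h (a * b) = Rmult (h a) (h b).
Hypothesis h_ppow_le : forall p k, prime p -> Rle (h (p ^ k.+1)) (h (p ^ k)).

Definition wsum (T : finType) (X : {set T}) (o : T -> nat) :=
  \big[Rplus/R0]_(x in X) h (o x).

Definition drops_at n m := forall p, prime p -> p %| n -> logn p m < logn p n ->
  Rlt (h (p ^ (logn p m).+1)) (h (p ^ logn p m)).

Definition layer_coef p e j :=
  if j < e then Rminus (h (p ^ j)) (h (p ^ j.+1)) else h (p ^ e).

Lemma layer_coef_ge0 p e j : prime p -> Rle 0 (layer_coef p e j).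
Proof.
move=> pp; rewrite /layer_coef; case: ifP => _; last exact: Rlt_le.
by have := h_ppow_le j pp; lra.
Qed.

Lemma layer_coef_gt0 p n m : prime p -> drops_at n m ->
  Rlt 0 (layer_coef p (logn p n) (logn p m)).
Proof.
move=> pp dm; rewrite /layer_coef; case: ifP => [lt|_]; last exact: h_gt0.
have : 0 < logn p n by apply: leq_ltn_trans lt.
by rewrite logn_gt0 mem_primes => /and3P[_ _ pn]; have := dm p pp pn lt; lra.
Qed.

Lemma sum_layer_coef p e a : a <= e ->
  \big[Rplus/R0]_(j < e.+1 | a <= j) layer_coef p e j = h (p ^ a).
Proof.
move=> ae; rewrite big_mkcond big_ord_recr -big_mkcond /= ae /layer_coef ltnn.
rewrite (eq_bigr (fun j : 'I_e => Rminus (h (p ^ j)) (h (p ^ j.+1)))) => [|j _].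
  by rewrite (rsum_telescope (fun k => h (p ^ k))) //; lra.
by rewrite ltn_ord.
Qed.

Lemma wsum_layers p n (T : finType) (X : {set T}) o : prime p -> 0 < n ->
  {in X, forall x, o x %| n} ->
  wsum X o = \big[Rplus/R0]_(j < (logn p n).+1)
               Rmult (layer_coef p (logn p n) j) (wsum (layer X o p j) (p'part o p)).
Proof.
move=> pp n0 o_dvd; rewrite /wsum.
transitivity (\big[Rplus/R0]_(x in X) \big[Rplus/R0]_(j < (logn p n).+1 | logn p (o x) <= j)
                Rmult (layer_coef p (logn p n) j) (h (p'part o p x))).
  apply: eq_bigr => x Xx; have ox0 := dvdn_gt0 n0 (o_dvd x Xx).
  rewrite -big_distrl /= sum_layer_coef ?dvdn_leq_log ?o_dvd // -p_part.
  by rewrite -h_mul ?part_gt0 ?coprime_partC ?partnC.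
rewrite (exchange_big_dep xpredT) //=; apply: eq_bigr => j _; rewrite big_distrr /=.
by apply: eq_bigl => x; rewrite inE.
Qed.

Lemma drops_at_p'part p n m : prime p -> 0 < n -> 0 < m -> drops_at n m ->
  drops_at n`_p^' m`_p^'.
Proof.
move=> pp n0 m0 dm q qq qn'.
have qp : q != p by have := pnat_dvd qn' (part_pnat _ _); rewrite pnatE // !inE.
rewrite !logn_p'part // => lt; apply: dm => //.
exact: dvdn_trans qn' (dvdn_part _ _).
Qed.

Lemma wsum_dvd1 (T : finType) (X : {set T}) o : {in X, forall x, o x %| 1} ->
  wsum X o = Rmult (INR (count_dvd X o 1)) (h 1).
Proof.
move=> o_dvd1; rewrite /count_dvd (_ : [set x in X | o x %| 1] = X); last first.
  by apply/setP => x; rewrite inE andb_idr //; apply: o_dvd1.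
by rewrite -rsum_const; apply: eq_bigr => x /o_dvd1; rewrite dvdn1 => /eqP->.
Qed.

Lemma wsum_le_of_count_dvd_le n (T U : finType) (X : {set T}) (Y : {set U}) oX oY :
  0 < n -> {in X, forall x, oX x %| n} -> {in Y, forall y, oY y %| n} ->
  (forall m, m %| n -> count_dvd Y oY m <= count_dvd X oX m) ->
  Rle (wsum Y oY) (wsum X oX).
Proof.
elim/ltn_ind: n T U X Y oX oY => n IH T U X Y oX oY n0 oX_dvd oY_dvd count_le.
have [n_le1 | n_gt1] := leqP n 1.
  have n1 : n = 1 by apply/eqP; rewrite eqn_leq n_le1.
  rewrite n1 in oX_dvd oY_dvd count_le; rewrite !wsum_dvd1 //.
  by apply/Rmult_le_compat_r/le_INR/leP/count_le; first exact/Rlt_le.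
set p := pdiv n; have pp : prime p := pdiv_prime n_gt1; have pn := pdiv_dvd n.
rewrite (wsum_layers pp n0 oX_dvd) (wsum_layers pp n0 oY_dvd).
apply: rsum_le => j _; apply: Rmult_le_compat_l; first exact: layer_coef_ge0.
apply: (IH n`_p^') => //; first exact: p'part_lt.
- exact: p'part_dvd_layer.
- exact: p'part_dvd_layer.
- by apply: count_dvd_layer_le; rewrite // -ltnS.
Qed.

Lemma wsum_lt_of_count_dvd_lt n (T U : finType) (X : {set T}) (Y : {set U}) oX oY m :
  0 < n -> {in X, forall x, oX x %| n} -> {in Y, forall y, oY y %| n} ->
  (forall m, m %| n -> count_dvd Y oY m <= count_dvd X oX m) ->
  m %| n -> drops_at n m -> count_dvd Y oY m < count_dvd X oX m ->
  Rlt (wsum Y oY) (wsum X oX).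
Proof.
elim/ltn_ind: n T U X Y oX oY m.
move=> n IH T U X Y oX oY m n0 oX_dvd oY_dvd count_le mn dm lt_m.
have [n_le1 | n_gt1] := leqP n 1.
  have n1 : n = 1 by apply/eqP; rewrite eqn_leq n_le1.
  rewrite n1 dvdn1 in oX_dvd oY_dvd mn; rewrite (eqP mn) in lt_m; rewrite !wsum_dvd1 //.
  by apply/Rmult_lt_compat_r/lt_INR/ltP.
set p := pdiv n; have pp : prime p := pdiv_prime n_gt1; have m0 := dvdn_gt0 n0 mn.
have a_le : logn p m < (logn p n).+1 by rewrite ltnS dvdn_leq_log.
rewrite (wsum_layers pp n0 oX_dvd) (wsum_layers pp n0 oY_dvd).
apply: (rsum_lt (i0 := Ordinal a_le)) => //= [j _|].
  apply: Rmult_le_compat_l; first exact: layer_coef_ge0.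
  apply: (wsum_le_of_count_dvd_le (n := n`_p^')) => //.
  - exact: p'part_dvd_layer.
  - exact: p'part_dvd_layer.
  - by apply: count_dvd_layer_le; rewrite // -ltnS.
apply: Rmult_lt_compat_l; first exact: layer_coef_gt0.
apply: (IH n`_p^' _ _ _ _ _ _ _ m`_p^') => //.
- exact/p'part_lt/pdiv_dvd.
- exact: p'part_dvd_layer.
- exact: p'part_dvd_layer.
- by apply: count_dvd_layer_le; rewrite // -ltnS.
- exact: partn_dvd.
- exact: drops_at_p'part.
by rewrite !(count_dvd_layer pp n0) ?partn_dvd // -p_part partnC.
Qed.

End Comparison.

Definition weight (r s : R) (d : nat) : R :=
  Rdiv (Rpower (INR d) s) (Rpower (INR (totient d)) r).

Section Weight.
Local Open Scope R_scope.
Variables r s : R.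

Lemma weightE d : weight r s d = exp (s * ln (INR d) - r * ln (INR (totient d))).
Proof. by rewrite /weight /Rpower /Rdiv /Rminus exp_plus exp_Ropp. Qed.

Lemma weight_gt0 d : 0 < weight r s d.
Proof. by rewrite weightE; apply: exp_pos. Qed.

Lemma weight_mul a b : (0 < a)%N -> (0 < b)%N -> coprime a b ->
  weight r s (a * b) = weight r s a * weight r s b.
Proof.
move=> a0 b0 cab; rewrite !weightE totient_coprime // !mult_INR.
rewrite !ln_mult; try by apply/INR_gt0; rewrite ?totient_gt0.
by rewrite -exp_plus; congr exp; ring.
Qed.

Lemma weight_scale a d : (0 < a)%N -> (0 < d)%N -> totient (a * d) = (a * totient d)%N ->
  weight r s (a * d) = exp ((s - r) * ln (INR a)) * weight r s d.
Proof.
move=> a0 d0 ta; rewrite !weightE ta !mult_INR.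
rewrite !ln_mult; try by apply/INR_gt0; rewrite ?totient_gt0.
by rewrite -exp_plus; congr exp; ring.
Qed.

Lemma weight1 : weight r s 1 = 1.
Proof. by rewrite weightE /= ln_1 -exp_0; congr exp; ring. Qed.

Lemma weight_prime p : prime p -> weight r s p = exp (s * ln (INR p) - r * ln (INR p.-1)).
Proof. by move=> pp; rewrite weightE totient_prime. Qed.

Hypotheses (s_lt_r : s < r) (s_le0 : s <= 0).

Lemma ln_pred_prime p : prime p -> 0 <= ln (INR p.-1) < ln (INR p).
Proof.
move=> pp; have p1 : 1 <= INR p.-1.
  by apply/(le_INR 1)/leP; rewrite -ltnS prednK ?prime_gt1 ?prime_gt0.
split; first exact: ln_ge0.
by apply: ln_increasing; [lra | apply/lt_INR/ltP; rewrite ltn_predL prime_gt0].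
Qed.

Lemma weight_prime_le p : prime p -> weight r s p <= weight r s 1.
Proof.
move=> pp; have [lq lqp] := ln_pred_prime pp.
rewrite weight_prime // weight1 -exp_0; apply: exp_le_exp; nra.
Qed.

Lemma weight_prime_lt p : prime p -> s < 0 \/ (2 < p)%N -> weight r s p < weight r s 1.
Proof.
move=> pp s_or_p; have [lq lqp] := ln_pred_prime pp.
rewrite weight_prime // weight1 -exp_0; apply: exp_increasing.
case: s_or_p => [|p2]; first by nra.
have : (1 < p.-1)%N by rewrite -ltnS prednK ?prime_gt0.
by move/INR_gt1/ln_gt0; nra.
Qed.

Lemma weight_ppow_lt p k : prime p -> (0 < k)%N -> weight r s (p ^ k.+1) < weight r s (p ^ k).
Proof.
move=> pp; case: k => // k _; have p0 := prime_gt0 pp.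
rewrite [(p ^ k.+2)%N]expnS weight_scale ?expn_gt0 ?p0 //; last first.
  by rewrite -expnS !totient_pfactor //= expnS mulnCA.
rewrite -[X in _ < X]Rmult_1_l; apply/Rmult_lt_compat_r; first exact: weight_gt0.
rewrite -exp_0; apply: exp_increasing.
have := ln_gt0 (INR_gt1 (prime_gt1 pp)); nra.
Qed.

Lemma weight_ppow_le p k : prime p -> weight r s (p ^ k.+1) <= weight r s (p ^ k).
Proof.
move=> pp; case: k => [|k]; first by rewrite expn1; exact: weight_prime_le.
exact/Rlt_le/weight_ppow_lt.
Qed.

Lemma weight_drops_at n m : (0 < m)%N -> s < 0 \/ 2 %| m \/ ~~ (2 %| n) ->
  drops_at (weight r s) n m.
Proof.
move=> m0 cond p pp pn _; have [k0 | k_gt0] := posnP (logn p m); last exact: weight_ppow_lt.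
rewrite k0 expn1; apply: weight_prime_lt => //; case: cond => [|cond]; [by left | right].
have := prime_gt1 pp; rewrite leq_eqVlt => /orP[/eqP p2 | //]; rewrite -p2 in pn k0.
case: cond => [m2 | /negP //]; suff : (0 < logn 2 m)%N by rewrite k0.
by rewrite logn_gt0 mem_primes m0 m2.
Qed.
End Weight.

Section CyclicSubgroups.
Local Open Scope group_scope.
Variable gT : finGroupType.
Implicit Types G C H : {group gT}.

Definition cyclic_subgroups (G : {set gT}) m :=
  [set H : {group gT} | [&& H \subset G, cyclic H & #|H| == m]].

Lemma count_dvd_Ldiv G m : count_dvd G order m = #|'Ldiv_m(G)|.
Proof. by apply: eq_card => x; rewrite !inE order_dvdn. Qed.

Lemma dvdn_count_dvd G m : m %| #|G| -> m %| count_dvd G order m.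
Proof. by rewrite count_dvd_Ldiv; apply: Frobenius_Ldiv. Qed.

Lemma count_dvd_ge G m : m %| #|G| -> m <= count_dvd G order m.
Proof.
move=> mG; apply: dvdn_leq (dvdn_count_dvd mG).
by apply/card_gt0P; exists 1; rewrite inE group1 order1 dvd1n.
Qed.

Lemma cyclic_subgroup_of_order C d : cyclic C -> d %| #|C| ->
  exists2 D : {group gT}, D \subset C & #|D| = d.
Proof.
case/cyclicP=> c defC dC; have dc : d %| #[c] by rewrite /order -defC.
exists <[c ^+ (#[c] %/ d)]>%G; first by rewrite defC cycleX.
have /setP/(_ <[c ^+ (#[c] %/ d)]>%G) := cycle_sub_group dc.
by rewrite set11 inE => /andP[_ /eqP].
Qed.

Lemma cyclic_subgroups_le1 C d : cyclic C -> #|cyclic_subgroups C d| <= 1.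
Proof.
move=> cC; apply/card_le1_eqP => H K; rewrite !inE => /and3P[HC _ /eqP oH] /and3P[KC _ /eqP oK].
by apply/val_inj/eqP; rewrite (eq_subG_cyclic cC KC HC) oH oK.
Qed.

Lemma set_order_dvd_eq G C : C \subset G -> cyclic C ->
    (forall d, d %| #|C| -> #|cyclic_subgroups G d| <= 1) ->
  [set x in G | #[x] %| #|C|] = C.
Proof.
move=> CG cC uniq; apply/setP => x; rewrite inE.
apply/andP/idP => [[Gx xC] | Cx]; last by rewrite (subsetP CG) ?order_dvdG.
have [D DC oD] := cyclic_subgroup_of_order cC xC.
have Dx : D = <[x]>%G.
  apply: (card_le1_eqP (uniq _ xC)); rewrite !inE ?cycle_subG ?Gx ?cycle_cyclic ?eqxx //.
  by rewrite (subset_trans DC CG) (cyclicS DC cC) oD eqxx.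
by rewrite -cycle_subG -[<[x]>]/(gval <[x]>%G) -Dx.
Qed.

Lemma count_dvd_cyclic C m : cyclic C -> m %| #|C| -> count_dvd C order m = m.
Proof.
move=> cC mC; have [D DC oD] := cyclic_subgroup_of_order cC mC.
rewrite /count_dvd -{1}oD set_order_dvd_eq ?oD ?(cyclicS DC cC) //.
by move=> d _; apply: cyclic_subgroups_le1.
Qed.

Lemma count_dvd_of_num_cyclic_subgroups1 G n : 0 < n ->
    (forall m, 0 < m -> m %| n -> num_cyclic_subgroups G m = 1%N) ->
  forall m, m %| n -> count_dvd G order m = m.
Proof.
move=> n0 uniq m mn; have m0 := dvdn_gt0 n0 mn.
have [C defC] := cards1P (introT eqP (uniq m m0 mn)).
have : C \in cyclic_subgroups G m by rewrite /cyclic_subgroups defC set11.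
rewrite inE => /and3P[CG cC /eqP oC].
rewrite /count_dvd -{1}oC set_order_dvd_eq // ?oC => d dm.
have := uniq d (dvdn_gt0 m0 dm) (dvdn_trans dm mn).
by rewrite /num_cyclic_subgroups /cyclic_subgroups => ->.
Qed.

Lemma count_dvd_by_order G m : 0 < m ->
  count_dvd G order m = (\sum_(d < m.+1 | d %| m) #|[set x in G | #[x] == d]|)%N.
Proof.
move=> m0; rewrite /count_dvd -sum1_card.
rewrite (partition_big (fun x => inord #[x] : 'I_m.+1) (fun d : 'I_m.+1 => val d %| m)) /=.
  apply: eq_bigr => d dm; rewrite -sum1_card; apply: eq_bigl => x; rewrite !inE.
  case Gx: (x \in G) => //=; apply/andP/eqP => [[xm /eqP <-] | xd].
    by rewrite inordK // ltnS dvdn_leq.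
  by split; [rewrite xd | apply/eqP/val_inj; rewrite /= xd inordK // ltnS -xd dvdn_leq].
by move=> x; rewrite inE => /andP[_ xm]; rewrite inordK // ltnS dvdn_leq.
Qed.

Lemma card_order_eq_totient G n : 0 < n -> (forall m, m %| n -> count_dvd G order m = m) ->
  forall d, d %| n -> #|[set x in G | #[x] == d]| = totient d.
Proof.
move=> n0 count_eq; elim/ltn_ind => d IH dn; have d0 := dvdn_gt0 n0 dn.
have : (\sum_(e < d.+1 | e %| d) #|[set x in G | #[x] == e]|)%N =
       (\sum_(e < d.+1 | e %| d) totient e)%N.
  by rewrite -count_dvd_by_order // count_eq // (sum_totient_dvd d).
rewrite [X in X = _ -> _](bigD1 ord_max) ?dvdnn //= [X in _ = X -> _](bigD1 ord_max) ?dvdnn //=.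
rewrite (eq_bigr (fun e : 'I_d.+1 => totient e)) => [/addIn // | e /andP[ed ne]].
have ltd : e < d.
  by rewrite ltn_neqAle -ltnS ltn_ord andbT; apply: contra ne => /eqP ed_eq; apply/eqP/val_inj.
by rewrite IH // (dvdn_trans ed dn).
Qed.

Lemma num_cyclic_subgroups1_of_count_dvd G n : 0 < n ->
    (forall m, m %| n -> count_dvd G order m = m) ->
  forall m, 0 < m -> m %| n -> num_cyclic_subgroups G m = 1%N.
Proof.
move=> n0 count_eq m m0 mn.
have : 0 < #|[set x in G | #[x] == m]| by rewrite (card_order_eq_totient n0) ?totient_gt0.
case/card_gt0P=> x; rewrite inE => /andP[Gx /eqP xm].
have Ldiv_m (K : {group gT}) : K \subset G -> #|K| = m -> K :=: [set y in G | #[y] %| m].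
  move=> KG oK; apply/eqP; rewrite eqEcard -[#|[set y in G | _]|]/(count_dvd G order m).
  rewrite count_eq // oK leqnn andbT; apply/subsetP => y Ky.
  by rewrite inE (subsetP KG) // -oK order_dvdG.
have xG : <[x]> \subset G by rewrite cycle_subG.
apply/eqP/cards1P; exists <[x]>%G; apply/setP => H; rewrite !inE.
apply/and3P/eqP => [[HG _ /eqP oH] | ->]; last by rewrite xG cycle_cyclic /= -/(order x) xm.
by apply: val_inj; rewrite /= (Ldiv_m _ HG oH) (Ldiv_m _ xG).
Qed.

Lemma count_dvd_odd G m : odd m -> (2 * m %| #|G|)%N ->
  count_dvd G order (2 * m) = (2 * m)%N -> count_dvd G order m = m.
Proof.
move=> m_odd mG count2m; have m0 : 0 < m := odd_gt0 m_odd.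
have m2m : m %| 2 * m by apply: dvdn_mull.
have mG' := dvdn_trans m2m mG.
have sub : [set x in G | #[x] %| m] \subset [set x in G | #[x] %| 2 * m].
  by apply/subsetP => x; rewrite !inE => /andP[-> /dvdn_trans->].
have le2m : count_dvd G order m <= 2 * m by rewrite -count2m subset_leq_card.
have [k def_k] := dvdnP (dvdn_count_dvd mG').
have k_gt0 : 0 < k by rewrite -(ltn_pmul2r m0) -def_k (leq_trans m0) ?count_dvd_ge.
have : k <= 2 by rewrite -(leq_pmul2r m0) -def_k.
case: k k_gt0 def_k => [|[|[|]]] // _ def_k _; first by rewrite def_k mul1n.
have /subset_cardP/(_ sub) same : #|[set x in G | #[x] %| m]| = #|[set x in G | #[x] %| 2 * m]|.
  exact: etrans def_k (esym count2m).
have [x Gx ox2] := Cauchy (isT : prime 2) (dvdn_trans (dvdn_mulr m (dvdnn 2)) mG).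
by have := same x; rewrite !inE Gx ox2 dvdn_mulr //= dvdn2 m_odd.
Qed.

End CyclicSubgroups.

(* The weight fails to drop only at the step 1 -> 2 when s = 0; an odd m is then
   reached through 2m. *)
Lemma count_dvd_of_drops_at (gT : finGroupType) (G : {group gT}) n r s :
    Rlt s r -> Rle s 0 -> 0 < n -> n %| #|G| ->
    (forall m, m %| n -> drops_at (weight r s) n m -> count_dvd G order m = m) ->
  forall m, m %| n -> count_dvd G order m = m.
Proof.
move=> s_lt_r s_le0 n0 nG count_eq m mn; have m0 := dvdn_gt0 n0 mn.
have drops k : 0 < k -> Rlt s 0 \/ 2 %| k \/ ~~ (2 %| n) -> drops_at (weight r s) n k.
  exact: weight_drops_at.
have [s_lt0 | _] := Rlt_le_dec s 0; first by apply: count_eq => //; apply: drops => //; left.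
have [m2 | m_odd] := boolP (2 %| m).
  by apply: count_eq => //; apply: drops => //; right; left.
have [n2 | n_odd] := boolP (2 %| n); last first.
  by apply: count_eq => //; apply: drops => //; right; right.
have odd_m : odd m by rewrite -[odd m]negbK -dvdn2.
have m2n : 2 * m %| n by rewrite Gauss_dvd ?coprime2n ?n2.
apply: count_dvd_odd; rewrite ?(dvdn_trans m2n nG) //.
by apply: count_eq => //; apply: drops; [rewrite muln_gt0 | right; left; rewrite dvdn_mulr].
Qed.

Lemma Rsum_wsum (gT : finGroupType) (A : {set gT}) n r s :
  Rsum A n r s = wsum (weight r s) [set x in A | #[x]%g %| n] order.
Proof. by apply: eq_bigl => x; rewrite inE. Qed.

Lemma count_dvd_restrict (gT : finGroupType) (A : {set gT}) n m : m %| n ->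
  count_dvd [set x in A | #[x]%g %| n] order m = count_dvd A order m.
Proof.
move=> mn; apply: eq_card => x; rewrite !inE -andbA.
by case: (x \in A) => //=; apply: andb_idl => /dvdn_trans->.
Qed.

Section RsumComparison.
Variables (r s : R) (gT hT : finGroupType) (A : {set gT}) (B : {set hT}) (n : nat).
Hypotheses (s_lt_r : Rlt s r) (s_le0 : Rle s 0) (n_gt0 : 0 < n).
Hypothesis count_le : forall m, m %| n -> count_dvd B order m <= count_dvd A order m.

Let count_le_restrict m : m %| n ->
  count_dvd [set y in B | #[y]%g %| n] order m <= count_dvd [set x in A | #[x]%g %| n] order m.
Proof. by move=> mn; rewrite !count_dvd_restrict //; apply: count_le. Qed.

Lemma Rsum_le_of_count_dvd_le : Rle (Rsum B n r s) (Rsum A n r s).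
Proof.
rewrite !Rsum_wsum; apply: wsum_le_of_count_dvd_le n_gt0 _ _ count_le_restrict.
- exact: weight_gt0.
- exact: weight_mul.
- exact: weight_ppow_le.
- by move=> x /setIdP[].
- by move=> x /setIdP[].
Qed.

Lemma Rsum_lt_of_count_dvd_lt m : m %| n -> drops_at (weight r s) n m ->
  count_dvd B order m < count_dvd A order m -> Rlt (Rsum B n r s) (Rsum A n r s).
Proof.
move=> mn dm lt_m; rewrite !Rsum_wsum.
apply: (wsum_lt_of_count_dvd_lt _ _ _ n_gt0 _ _ count_le_restrict mn dm).
- exact: weight_gt0.
- exact: weight_mul.
- exact: weight_ppow_le.
- by move=> x /setIdP[].
- by move=> x /setIdP[].
by rewrite !count_dvd_restrict.
Qed.

End RsumComparison.

Lemma cyclic_Zp N : cyclic (Zp N).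
Proof. by rewrite /Zp; case: ifP => _; [rewrite Zp_cycle cycle_cyclic | exact: cyclic1]. Qed.

Lemma count_dvd_Cyc N m : 0 < N -> m %| N -> count_dvd (Cyc N) order m = m.
Proof. by move=> N0 mN; rewrite (count_dvd_cyclic (C := Zp_group N)) ?cyclic_Zp ?card_Zp. Qed.

Theorem mainTheorem4 (r s : R) (gT : finGroupType) (G : {group gT}) (n : nat) :
  Rlt s r -> Rle s R0 -> (0 < n)%N -> (n %| #|G|)%N ->
  Rle R0 (Tsum G n r s) /\
  (Tsum G n r s = R0 <->
     (forall m : nat, (0 < m)%N -> (m %| n)%N -> num_cyclic_subgroups G m = 1%N)).
Proof.
move=> s_lt_r s_le0 n0 nG; rewrite /Tsum.
(* Naming the goal's own sums lets lra match them: restating them elaborates #|G|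
   through a different coercion path. *)
set RG := Rsum G n r s; set RC := Rsum (Cyc _) n r s.
have countC m : m %| n -> count_dvd (Cyc #|G|) order m = m.
  by move=> mn; rewrite count_dvd_Cyc ?cardG_gt0 ?(dvdn_trans mn nG).
have countCG m : m %| n -> count_dvd (Cyc #|G|) order m <= count_dvd G order m.
  by move=> mn; rewrite countC // count_dvd_ge ?(dvdn_trans mn nG).
have le_CG : Rle RC RG by apply: Rsum_le_of_count_dvd_le.
split; first lra.
split => [T0 | uniq].
- apply: (num_cyclic_subgroups1_of_count_dvd n0).
  apply: (count_dvd_of_drops_at s_lt_r s_le0) => // m mn dm.
  have := countCG m mn; rewrite countC // leq_eqVlt => /orP[/eqP // | lt].
  have : Rlt RC RG.
    by apply: (Rsum_lt_of_count_dvd_lt s_lt_r s_le0 n0 countCG mn dm); rewrite countC.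
  lra.
- have : Rle RG RC.
    apply: Rsum_le_of_count_dvd_le => // m mn.
    by rewrite countC // (count_dvd_of_num_cyclic_subgroups1 n0).
  lra.
Qed.
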